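(* Let $\beta>0$, $\rho>0$, $\xi>0$, let $f,c_i$ ($i\in\mathcal I=\{1,\dots,m\}$) be continuously differentiable, and let $z_k=(x_k,u_k)$, $H_k$ a symmetric $n\times n$ matrix, and $d_k^c\in\mathbb{R}^{n+m}$ given, with $d_k^c=0$ whenever $r_k=0$. Let $d_k=(d_{xk},d_{uk})$ be an optimal solution of $$\min_{d}\ \hat q_k(d)=\rho\nabla f_k^Td_x+\sum_{i}\frac{\rho\beta}{y_{ki}+\lambda_{ki}}(\nabla c_{ki}^Td_x+\rho d_{ui})+\tfrac12d_x^TH_kd_x+\tfrac12\sum_i\frac{\rho\beta}{(y_{ki}+\lambda_{ki})^2}(\nabla c_{ki}^Td_x+\rho d_{ui})^2\quad\text{s.t.}\quad R_k^Td=R_k^Td_k^c.$$ Let $\Phi_\xi'(z_k;d_k)$ denote the directional derivative of $z\mapsto\Phi_\xi(z;\beta,\rho)$ at $z_k$ along $d_k$. Then: (1) $\Phi'_\xi(z_k;d_k)\le\xi\Big(\rho\nabla f_k^Td_{xk}+\sum_i\frac{\rho\beta}{y_{ki}+\lambda_{ki}}(\nabla c_{ki}^Td_{xk}+\rho d_{uki})\Big)+\|r_k+R_k^Td_k\|-\|r_k\|$. (2) If $r_k=0$, then $\Phi'_\xi(z_k;d_k)\le-\tfrac12\xi\,d_k^TQ_kd_k$.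
   Context: Notation: $y_i(x,u;\beta,\rho)=\tfrac12[\sqrt{(c_i(x)+\rho u_i)^2+4\rho\beta}-(c_i(x)+\rho u_i)]$, $\lambda_i(x,u;\beta,\rho)=\tfrac12[\sqrt{(c_i(x)+\rho u_i)^2+4\rho\beta}+(c_i(x)+\rho u_i)]$; $y_{ki},\lambda_{ki}$ are their values at $(x_k,u_k)$; $c_{ki}=c_i(x_k)$, $\nabla c_{ki}=\nabla c_i(x_k)$, $\nabla f_k=\nabla f(x_k)$. The merit function is $\Phi_\xi(x,u;\beta,\rho)=\xi\rho f(x)-\xi\rho\beta\sum_i\ln y_i(x,u;\beta,\rho)+\|c(x)+y(x,u;\beta,\rho)\|$ (Euclidean norm). $r_k=c(x_k)+y(x_k,u_k;\beta,\rho)\in\mathbb{R}^m$. $R_k$ is the $(n+m)\times m$ matrix whose $i$th column is $\big(\tfrac{\lambda_{ki}}{y_{ki}+\lambda_{ki}}\nabla c_{ki};\,-\rho\tfrac{y_{ki}}{y_{ki}+\lambda_{ki}}e_i\big)$, $e_i$ the $i$th unit vector in $\mathbb{R}^m$. $Q_k$ is the symmetric matrix such that $d^TQ_kd=d_x^TH_kd_x+\sum_i\frac{\rho\beta}{(y_{ki}+\lambda_{ki})^2}(\nabla c_{ki}^Td_x+\rho d_{ui})^2$, namely $Q_k=\begin{pmatrix}H_k+\sum_i w_{ki}\nabla c_{ki}\nabla c_{ki}^T & G_k\\ G_k^T&\mathrm{diag}(\rho^2w_{ki})\end{pmatrix}$ with $w_{ki}=\rho\beta/(y_{ki}+\lambda_{ki})^2$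 and $G_k$ having columns $\rho w_{ki}\nabla c_{ki}$. *)

From Stdlib Require Import Reals.
From mathcomp Require Import ssreflect ssrfun ssrbool eqtype ssrnat seq fintype bigop.
Open Scope R_scope.
Set Implicit Arguments.
Unset Strict Implicit.

Definition dotv (n : nat) (a b : 'I_n -> R) : R :=
  \big[Rplus/R0]_(i < n) (a i * b i).
Definition normv (n : nat) (a : 'I_n -> R) : R := sqrt (dotv a a).

Definition has_gradient (n : nat) (f : ('I_n -> R) -> R) (g : 'I_n -> R)
    (x : 'I_n -> R) : Prop :=
  forall eps, 0 < eps -> exists delta, 0 < delta /\
    forall h : 'I_n -> R, normv h < delta ->
      Rabs (f (fun j => x j + h j) - f x - dotv g h) <= eps * normv h.

Definition C1_with_grad (n : nat) (f : ('I_n -> R) -> R)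
    (gf : ('I_n -> R) -> ('I_n -> R)) : Prop :=
  (forall x, has_gradient f (gf x) x) /\
  (forall x eps, 0 < eps -> exists delta, 0 < delta /\
     forall x', normv (fun j => x' j - x j) < delta ->
       normv (fun j => gf x' j - gf x j) < eps).

Definition yfun (n m : nat) (c : 'I_m -> ('I_n -> R) -> R) (beta rho : R)
    (x : 'I_n -> R) (u : 'I_m -> R) (i : 'I_m) : R :=
  (sqrt ((c i x + rho * u i) ^ 2 + 4 * rho * beta) - (c i x + rho * u i)) / 2.
Definition lamfun (n m : nat) (c : 'I_m -> ('I_n -> R) -> R) (beta rho : R)
    (x : 'I_n -> R) (u : 'I_m -> R) (i : 'I_m) : R :=
  (sqrt ((c i x + rho * u i) ^ 2 + 4 * rho * beta) + (c i x + rho * u i)) / 2.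

Definition Phi (n m : nat) (f : ('I_n -> R) -> R) (c : 'I_m -> ('I_n -> R) -> R)
    (xi beta rho : R) (x : 'I_n -> R) (u : 'I_m -> R) : R :=
  xi * rho * f x
  - xi * rho * beta * (\big[Rplus/R0]_(i < m) ln (yfun c beta rho x u i))
  + normv (fun i => c i x + yfun c beta rho x u i).

Definition rvec (n m : nat) (c : 'I_m -> ('I_n -> R) -> R) (beta rho : R)
    (x : 'I_n -> R) (u : 'I_m -> R) : 'I_m -> R :=
  fun i => c i x + yfun c beta rho x u i.

Definition RkT (n m : nat) (c : 'I_m -> ('I_n -> R) -> R)
    (gc : 'I_m -> ('I_n -> R) -> ('I_n -> R)) (beta rho : R)
    (x : 'I_n -> R) (u : 'I_m -> R) (dx : 'I_n -> R) (du : 'I_m -> R)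
    : 'I_m -> R :=
  fun i =>
    let y := yfun c beta rho x u i in
    let l := lamfun c beta rho x u i in
    l / (y + l) * dotv (gc i x) dx - rho * (y / (y + l)) * du i.

Definition quadH (n : nat) (H : 'I_n -> 'I_n -> R) (dx : 'I_n -> R) : R :=
  \big[Rplus/R0]_(i < n) \big[Rplus/R0]_(j < n) (dx i * H i j * dx j).

Definition linpart (n m : nat) (c : 'I_m -> ('I_n -> R) -> R)
    (gf : ('I_n -> R) -> ('I_n -> R))
    (gc : 'I_m -> ('I_n -> R) -> ('I_n -> R)) (beta rho : R)
    (x : 'I_n -> R) (u : 'I_m -> R) (dx : 'I_n -> R) (du : 'I_m -> R) : R :=
  rho * dotv (gf x) dx
  + \big[Rplus/R0]_(i < m)
      (rho * beta / (yfun c beta rho x u i + lamfun c beta rho x u i)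
       * (dotv (gc i x) dx + rho * du i)).

Definition quadQ (n m : nat) (c : 'I_m -> ('I_n -> R) -> R)
    (gc : 'I_m -> ('I_n -> R) -> ('I_n -> R)) (H : 'I_n -> 'I_n -> R)
    (beta rho : R) (x : 'I_n -> R) (u : 'I_m -> R)
    (dx : 'I_n -> R) (du : 'I_m -> R) : R :=
  quadH H dx
  + \big[Rplus/R0]_(i < m)
      (rho * beta / (yfun c beta rho x u i + lamfun c beta rho x u i) ^ 2
       * (dotv (gc i x) dx + rho * du i) ^ 2).

Definition qhat (n m : nat) (c : 'I_m -> ('I_n -> R) -> R)
    (gf : ('I_n -> R) -> ('I_n -> R))
    (gc : 'I_m -> ('I_n -> R) -> ('I_n -> R)) (H : 'I_n -> 'I_n -> R)
    (beta rho : R) (x : 'I_n -> R) (u : 'I_m -> R)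
    (dx : 'I_n -> R) (du : 'I_m -> R) : R :=
  linpart c gf gc beta rho x u dx du + / 2 * quadQ c gc H beta rho x u dx du.

Definition dir_deriv (n m : nat) (F : ('I_n -> R) -> ('I_m -> R) -> R)
    (x : 'I_n -> R) (u : 'I_m -> R) (dx : 'I_n -> R) (du : 'I_m -> R)
    (L : R) : Prop :=
  forall eps, 0 < eps -> exists delta, 0 < delta /\
    forall t, 0 < t < delta ->
      Rabs ((F (fun j => x j + t * dx j) (fun i => u i + t * du i) - F x u) / t
            - L) < eps.

(* Along the ray z_k + t d_k the merit function is the sum of the barrier part
   xi rho f - xi rho beta sum_i ln y_i, whose derivative at t = 0 is xi times the
   linear part of q_k, and of the norm of the curve r(z_k + t d_k), whose velocity
   at t = 0 is R_k^T d_k.  That norm has a right derivative: |R_k^T d_k| if r_k = 0,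
   and <r_k, R_k^T d_k> / |r_k| <= |r_k + R_k^T d_k| - |r_k| (Cauchy-Schwarz)
   otherwise; this is (1).  If r_k = 0 then d_k^c = 0, so R_k^T d_k = 0 and d = 0
   is feasible; optimality gives q_k(d_k) <= q_k(0) = 0, i.e. the linear part is at
   most -1/2 d_k^T Q_k d_k, and (1) becomes (2). *)

From HB Require Import structures.
From Pilot Require Import Defs.
From Stdlib Require Import Reals Lra Psatz FunctionalExtensionality.
From mathcomp Require Import ssreflect ssrfun ssrbool eqtype ssrnat seq fintype bigop.
Open Scope R_scope.
Set Implicit Arguments.
Unset Strict Implicit.

(* Makes the generic bigop lemmas apply to the sums [\big[Rplus/R0]] of [Defs]. *)
HB.instance Definition _ := Monoid.isComLaw.Build R R0 Rplus
  (fun a b c => esym (Rplus_assoc a b c)) Rplus_comm Rplus_0_l.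
HB.instance Definition _ := Monoid.isMulLaw.Build R R0 Rmult Rmult_0_l Rmult_0_r.
HB.instance Definition _ := Monoid.isAddLaw.Build R Rmult Rplus
  Rmult_plus_distr_r Rmult_plus_distr_l.

Lemma dotv_ge0 n (a : 'I_n -> R) : 0 <= dotv a a.
Proof. by apply: (big_ind (fun s => 0 <= s)) => [|s t|i _]; [lra|lra|nra]. Qed.

Lemma normv_ge0 n (a : 'I_n -> R) : 0 <= normv a.
Proof. exact: sqrt_pos. Qed.

Lemma dotv_eq0 n (a : 'I_n -> R) : dotv a a = 0 -> forall i, a i = 0.
Proof.
move=> + i; rewrite /dotv (bigD1 i) //=; set rest := \big[_/_]_(_ <- _ | _) _.
have : 0 <= rest by apply: (big_ind (fun s => 0 <= s)) => [|s t|j _]; [lra|lra|nra].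
move=> Hrest Ha; apply: Rsqr_0_uniq; rewrite /Rsqr; nra.
Qed.

Lemma dotv0r n (a b : 'I_n -> R) : (forall i, b i = 0) -> dotv a b = 0.
Proof. by move=> Hb; rewrite /dotv big1 // => i _; rewrite Hb Rmult_0_r. Qed.

Lemma normv0 n (a : 'I_n -> R) : (forall i, a i = 0) -> normv a = 0.
Proof. by move=> Ha; rewrite /normv dotv0r // sqrt_0. Qed.

Lemma dotvDr n (p a b : 'I_n -> R) :
  dotv p (fun i => a i + b i) = dotv p a + dotv p b.
Proof. by rewrite /dotv -big_split; apply: eq_bigr => i _ /=; ring. Qed.

Lemma dotv_scaler n (a b : 'I_n -> R) (h : R) :
  dotv a (fun j => h * b j) = h * dotv a b.
Proof. by rewrite /dotv big_distrr; apply: eq_bigr => i _ /=; ring. Qed.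

Lemma normv_scale n (a : 'I_n -> R) (h : R) :
  normv (fun j => h * a j) = Rabs h * normv a.
Proof.
rewrite /normv /dotv -sqrt_Rsqr_abs -sqrt_mult_alt; last exact: Rle_0_sqr.
by rewrite big_distrr; congr sqrt; apply: eq_bigr => i _ /=; rewrite /Rsqr; ring.
Qed.

Lemma normv_sqr n (p : 'I_n -> R) : normv p * normv p = dotv p p.
Proof. exact: sqrt_sqrt (dotv_ge0 p). Qed.

Lemma dotv_comb n (p q : 'I_n -> R) (a b : R) :
  dotv (fun i => a * p i + b * q i) (fun i => a * p i + b * q i)
  = a ^ 2 * dotv p p + 2 * a * b * dotv p q + b ^ 2 * dotv q q.
Proof. by rewrite /dotv !big_distrr -!big_split; apply: eq_bigr => i _ /=; ring. Qed.

Lemma dotv_le_normv n (p q : 'I_n -> R) : dotv p q <= normv p * normv q.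
Proof.
have HP := dotv_ge0 p; have HQ := dotv_ge0 q.
set P := dotv p p in HP *; set Q := dotv q q in HQ *; set C := dotv p q.
have Hcomb a b : 0 <= a ^ 2 * P + 2 * a * b * C + b ^ 2 * Q.
  by rewrite -dotv_comb; apply: dotv_ge0.
have HC2 : C ^ 2 <= P * Q.
  have := Hcomb Q (- C); have := Hcomb C (- P); have := Hcomb 1 (- C).
  (* the three combinations cover Q > 0, P > 0 and P = Q = 0 *)
  case: (Rle_lt_or_eq_dec 0 Q HQ) => [?|<-]; first nra.
  case: (Rle_lt_or_eq_dec 0 P HP) => [?|<-]; nra.
case: (Rle_or_lt C 0) => HC.
  by have := normv_ge0 p; have := normv_ge0 q; nra.
rewrite /normv -/P -/Q -sqrt_mult_alt // -(sqrt_pow2 C); last lra.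
exact: sqrt_le_1_alt.
Qed.

Lemma dotv_div_normv_le n (p a : 'I_n -> R) : 0 < normv p ->
  dotv p a / normv p <= normv (fun i => p i + a i) - normv p.
Proof.
move=> Hp; have := dotv_le_normv p (fun i => p i + a i).
rewrite dotvDr -normv_sqr => HCS.
apply: (Rmult_le_reg_r (normv p)) => //.
rewrite /Rdiv Rmult_assoc Rinv_l; nra.
Qed.

Lemma line_at0 n (x d : 'I_n -> R) : (fun j => x j + 0 * d j) = x.
Proof. by apply: functional_extensionality => j; ring. Qed.

Lemma derivable_pt_lim_affine a b x : derivable_pt_lim (fun t => a + t * b) x b.
Proof.
have := derivable_pt_lim_plus _ _ _ _ _ (derivable_pt_lim_const a x)
  (derivable_pt_lim_mult _ _ _ _ _ (derivable_pt_lim_id x) (derivable_pt_lim_const b x)).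
by congr derivable_pt_lim; rewrite /fct_cte; ring.
Qed.

Lemma derivable_pt_lim_line n (g : ('I_n -> R) -> R) (G x d : 'I_n -> R) :
  has_gradient g G x ->
  derivable_pt_lim (fun t => g (fun j => x j + t * d j)) 0 (dotv G d).
Proof.
move=> Hg eps Heps.
(* Scaling by [normv d + 1] rather than [normv d] covers [d = 0]. *)
have Hd := normv_ge0 d.
have Heps' : 0 < eps / (normv d + 1) by apply: Rdiv_lt_0_compat; lra.
have Eeps : eps / (normv d + 1) * (normv d + 1) = eps by field; lra.
have [del [Hdel Hrem]] := Hg _ Heps'.
have Hdel' : 0 < del / (normv d + 1) by apply: Rdiv_lt_0_compat; lra.
have Edel : del / (normv d + 1) * (normv d + 1) = del by field; lra.
exists (mkposreal _ Hdel') => h Hh0 /= Hh.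
rewrite Rplus_0_l line_at0.
have Hah : 0 < Rabs h by apply: Rabs_pos_lt.
have Hhd : normv (fun j => h * d j) < del by rewrite normv_scale; nra.
have := Hrem _ Hhd; rewrite dotv_scaler normv_scale => Hb.
rewrite (_ : _ - dotv G d = (g (fun j => x j + h * d j) - g x - h * dotv G d) / h);
  last by field.
rewrite Rabs_mult Rabs_inv; apply: (Rmult_lt_reg_r (Rabs h)) => //.
rewrite Rmult_assoc Rinv_l; nra.
Qed.

Lemma derivable_pt_lim_bigsum (I : Type) (s : seq I) (G : I -> R -> R)
    (l : I -> R) (x : R) :
  (forall i, derivable_pt_lim (G i) x (l i)) ->
  derivable_pt_lim (fun t => \big[Rplus/R0]_(i <- s) G i t) x
    (\big[Rplus/R0]_(i <- s) l i).
Proof.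
move=> HG; elim: s => [|y s IH].
  rewrite big_nil (_ : (fun _ => _) = fun _ => 0);
    last by apply: functional_extensionality => t; rewrite big_nil.
  exact: derivable_pt_lim_const.
rewrite big_cons (_ : (fun _ => _) = fun t => G y t + \big[Rplus/R0]_(i <- s) G i t);
  last by apply: functional_extensionality => t; rewrite big_cons.
exact: derivable_pt_lim_plus.
Qed.

Lemma continuity_pt_bigsum (I : Type) (s : seq I) (G : I -> R -> R) (x : R) :
  (forall i, continuity_pt (G i) x) ->
  continuity_pt (fun t => \big[Rplus/R0]_(i <- s) G i t) x.
Proof.
move=> HG; elim: s => [|y s IH].
  rewrite (_ : (fun _ => _) = fun _ => 0);
    last by apply: functional_extensionality => t; rewrite big_nil.
  exact: continuity_pt_const.
rewrite (_ : (fun _ => _) = fun t => G y t + \big[Rplus/R0]_(i <- s) G i t);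
  last by apply: functional_extensionality => t; rewrite big_cons.
exact: continuity_pt_plus.
Qed.

Definition right_deriv0 (g : R -> R) (L : R) : Prop :=
  forall eps, 0 < eps -> exists delta, 0 < delta /\
    forall t, 0 < t < delta -> Rabs ((g t - g 0) / t - L) < eps.

Lemma right_deriv0_derivable g L : derivable_pt_lim g 0 L -> right_deriv0 g L.
Proof.
move=> Hg eps Heps; have [del Hdel] := Hg eps Heps.
exists del; split=> [|t [Ht Htd]]; first exact: cond_pos.
have := Hdel t ltac:(lra) ltac:(rewrite Rabs_right; lra).
by rewrite Rplus_0_l.
Qed.

Lemma right_deriv0_plus g h Lg Lh : right_deriv0 g Lg -> right_deriv0 h Lh ->
  right_deriv0 (fun t => g t + h t) (Lg + Lh).
Proof.
move=> Hg Hh eps Heps.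
have [d1 [Hd1 H1]] := Hg (eps / 2) ltac:(lra).
have [d2 [Hd2 H2]] := Hh (eps / 2) ltac:(lra).
exists (Rmin d1 d2); split=> [|t [Ht Htd]]; first exact: Rmin_glb_lt.
have := H1 t (conj Ht (Rlt_le_trans _ _ _ Htd (Rmin_l d1 d2))).
have := H2 t (conj Ht (Rlt_le_trans _ _ _ Htd (Rmin_r d1 d2))).
rewrite (_ : _ - (Lg + Lh) = ((g t - g 0) / t - Lg) + ((h t - h 0) / t - Lh));
  last by field; lra.
by move=> A B; apply: (Rle_lt_trans _ _ _ (Rabs_triang _ _)); lra.
Qed.

Lemma dir_deriv_right_deriv0 n m (F : ('I_n -> R) -> ('I_m -> R) -> R) x u dx du L :
  right_deriv0 (fun t => F (fun j => x j + t * dx j) (fun i => u i + t * du i)) L ->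
  dir_deriv F x u dx du L.
Proof. by rewrite /right_deriv0 !line_at0. Qed.

Lemma continuity_pt_difference_quotient g L :
  derivable_pt_lim g 0 L -> g 0 = 0 ->
  continuity_pt (fun t => if Req_EM_T t 0 then L else g t / t) 0.
Proof.
move=> Hg Hg0 eps Heps; have [del Hdel] := Hg eps Heps.
exists del; split=> [|t [[_ Ht] Htd]]; first exact: cond_pos.
rewrite /= /R_dist Rminus_0_r in Htd *.
case: (Req_EM_T t 0) => [Et|Hne]; first by case: Ht; rewrite Et.
case: (Req_EM_T 0 0) => [E00|]; last by [].
by have := Hdel t Hne Htd; rewrite Rplus_0_l Hg0 Rminus_0_r.
Qed.

Section NormOfCurve.

Variables (m : nat) (r : 'I_m -> R -> R) (a : 'I_m -> R).
Hypothesis r_deriv : forall i, derivable_pt_lim (r i) 0 (a i).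

Lemma right_deriv0_normv_null : (forall i, r i 0 = 0) ->
  right_deriv0 (fun t => normv (fun i => r i t)) (normv a).
Proof.
(* For t > 0, |r t| / t is the norm of the difference quotient, which extends
   continuously to t = 0 with value a. *)
move=> Hr0.
pose q i t := if Req_EM_T t 0 then a i else r i t / t.
pose G t := normv (fun i => q i t).
have HG : continuity_pt G 0.
  apply: (continuity_pt_comp (fun t => \big[Rplus/R0]_(i < m) (q i t * q i t)) sqrt).
    apply: continuity_pt_bigsum => i; apply: continuity_pt_mult;
      exact: continuity_pt_difference_quotient.
  by apply: continuity_pt_sqrt; apply: (big_ind (fun s => 0 <= s)) => [|s t|i _];
    [lra|lra|nra].
have G0 : G 0 = normv a.
  rewrite /G /normv /dotv; congr sqrt; apply: eq_bigr => i _.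
  by rewrite /q; case: (Req_EM_T 0 0).
have Gt t : 0 < t -> (normv (fun i => r i t) - normv (fun i => r i 0)) / t = G t.
  move=> Ht; rewrite (normv0 Hr0) Rminus_0_r.
  rewrite (_ : (fun i => r i t) = fun i => t * q i t); last first.
    apply: functional_extensionality => i; rewrite /q.
    by case: Req_dec_T => /= Et; [lra|field; lra].
  by rewrite normv_scale Rabs_right /G; [field|]; lra.
move=> eps Heps; have [alp [Halp Hc]] := HG eps Heps.
exists alp; split=> // t [Ht Hta].
rewrite Gt // -G0; apply: Hc; split; first by split=> //; lra.
by rewrite /= /R_dist Rminus_0_r Rabs_right; lra.
Qed.

Lemma derivable_pt_lim_normv : 0 < dotv (fun i => r i 0) (fun i => r i 0) ->
  derivable_pt_lim (fun t => normv (fun i => r i t)) 0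
    (dotv (fun i => r i 0) a / normv (fun i => r i 0)).
Proof.
move=> HD.
have Hsum : derivable_pt_lim (fun t => \big[Rplus/R0]_(i < m) (r i t * r i t)) 0
    (\big[Rplus/R0]_(i < m) (a i * r i 0 + r i 0 * a i)).
  by apply: derivable_pt_lim_bigsum => i; apply: derivable_pt_lim_mult.
have := derivable_pt_lim_comp _ sqrt _ _ _ Hsum (derivable_pt_lim_sqrt _ HD).
congr derivable_pt_lim.
rewrite (_ : \big[Rplus/R0]_(i < m) _ = 2 * dotv (fun i => r i 0) a); last first.
  by rewrite /dotv big_distrr; apply: eq_bigr => i _ /=; ring.
have := sqrt_lt_R0 _ HD; rewrite /normv => Hs; field; lra.
Qed.

Lemma right_deriv0_normv : exists L,
  right_deriv0 (fun t => normv (fun i => r i t)) L /\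
  L <= normv (fun i => r i 0 + a i) - normv (fun i => r i 0).
Proof.
case: (Req_dec (dotv (fun i => r i 0) (fun i => r i 0)) 0) => HD.
  have Hr0 := dotv_eq0 HD.
  exists (normv a); split; first exact: right_deriv0_normv_null.
  rewrite (normv0 Hr0) Rminus_0_r; apply: Req_le; congr normv.
  by apply: functional_extensionality => i; rewrite Hr0 Rplus_0_l.
have HDp : 0 < dotv (fun i => r i 0) (fun i => r i 0).
  by have := dotv_ge0 (fun i => r i 0); lra.
exists (dotv (fun i => r i 0) a / normv (fun i => r i 0)); split.
  exact/right_deriv0_derivable/derivable_pt_lim_normv.
by apply: dotv_div_normv_le; apply: sqrt_lt_R0.
Qed.

End NormOfCurve.

(* [yfun c beta rho x u i] is [ysmooth (4 * rho * beta) (c i x + rho * u i)]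
   by definition. *)
Definition ysmooth (K s : R) : R := (sqrt (s ^ 2 + K) - s) / 2.

Lemma sqrt_sq_add_gt0 K s : 0 < K -> 0 < sqrt (s ^ 2 + K).
Proof. by move=> HK; apply: sqrt_lt_R0; nra. Qed.

Lemma ysmooth_gt0 K s : 0 < K -> 0 < ysmooth K s.
Proof.
move=> HK; have Hq := sqrt_sqrt (s ^ 2 + K) ltac:(nra).
have := sqrt_sq_add_gt0 s HK; rewrite /ysmooth; nra.
Qed.

Lemma derivable_pt_lim_ysmooth K s : 0 < K ->
  derivable_pt_lim (ysmooth K) s (- ysmooth K s / sqrt (s ^ 2 + K)).
Proof.
move=> HK; have Hq := sqrt_sq_add_gt0 s HK.
have Hsqrt : derivable_pt_lim (fun t => sqrt (t ^ 2 + K)) s (s / sqrt (s ^ 2 + K)).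
  rewrite (_ : s / _ = / (2 * sqrt (s ^ 2 + K)) * (INR 2 * s ^ Nat.pred 2 + 0));
    last by change (INR 2 * s ^ Nat.pred 2) with (2 * s ^ 1); field; lra.
  apply: (derivable_pt_lim_comp (fun t => t ^ 2 + K) sqrt).
    exact: derivable_pt_lim_plus (derivable_pt_lim_pow s 2) (derivable_pt_lim_const K s).
  by apply: derivable_pt_lim_sqrt; nra.
have := derivable_pt_lim_scal _ (/ 2) _ _
  (derivable_pt_lim_minus _ _ _ _ _ Hsqrt (derivable_pt_lim_id s)).
rewrite (_ : mult_real_fct _ _ = ysmooth K); last first.
  apply: functional_extensionality => t.
  by rewrite /mult_real_fct /minus_fct /Ranalysis1.id /ysmooth; field.
by rewrite (_ : / 2 * _ = - ysmooth K s / sqrt (s ^ 2 + K)) // /ysmooth; field; lra.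
Qed.

Lemma yfun_add_lamfun n m (c : 'I_m -> ('I_n -> R) -> R) beta rho x u i :
  yfun c beta rho x u i + lamfun c beta rho x u i
  = sqrt ((c i x + rho * u i) ^ 2 + 4 * rho * beta).
Proof. by rewrite /yfun /lamfun; field. Qed.

Section MeritAlongLine.

Variables (n m : nat) (beta rho : R) (c : 'I_m -> ('I_n -> R) -> R)
  (gc : 'I_m -> ('I_n -> R) -> ('I_n -> R)) (x dx : 'I_n -> R) (u du : 'I_m -> R).
Hypotheses (beta_gt0 : 0 < beta) (rho_gt0 : 0 < rho)
  (c_grad : forall i, has_gradient (c i) (gc i x) x).

Local Notation xt t := (fun j => x j + t * dx j).
Local Notation ut t := (fun i => u i + t * du i).
Local Notation yk i := (yfun c beta rho x u i).
Local Notation lk i := (lamfun c beta rho x u i).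
Local Notation slope i := (dotv (gc i x) dx + rho * du i).

Let K_gt0 : 0 < 4 * rho * beta. Proof. nra. Qed.

Let yk_gt0 i : 0 < yk i. Proof. exact: ysmooth_gt0. Qed.

Let yk_add_lk_gt0 i : 0 < yk i + lk i.
Proof. by rewrite yfun_add_lamfun; apply: sqrt_sq_add_gt0. Qed.

Lemma derivable_yfun_line i :
  derivable_pt_lim (fun t => yfun c beta rho (xt t) (ut t) i) 0
    (- yk i / (yk i + lk i) * slope i).
Proof.
have Hs : derivable_pt_lim (fun t => c i (xt t) + rho * (u i + t * du i)) 0 (slope i).
  apply: derivable_pt_lim_plus; first exact: derivable_pt_lim_line.
  exact: derivable_pt_lim_scal (derivable_pt_lim_affine _ _ _).
have Hy := derivable_pt_lim_ysmooth (c i x + rho * u i) K_gt0.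
rewrite (_ : c i x + rho * u i = c i (xt 0) + rho * (u i + 0 * du i)) in Hy;
  last by rewrite line_at0; ring.
have := derivable_pt_lim_comp _ _ _ _ _ Hs Hy.
by congr derivable_pt_lim; rewrite yfun_add_lamfun line_at0 Rmult_0_l Rplus_0_r.
Qed.

Lemma derivable_rvec_line i :
  derivable_pt_lim (fun t => rvec c beta rho (xt t) (ut t) i) 0
    (RkT c gc beta rho x u dx du i).
Proof.
have := derivable_pt_lim_plus _ _ _ _ _ (derivable_pt_lim_line dx (c_grad i))
  (derivable_yfun_line i).
congr derivable_pt_lim; rewrite /RkT /=.
by have := yk_add_lk_gt0 i => Hpos; field; lra.
Qed.

Lemma derivable_ln_yfun_line i :
  derivable_pt_lim (fun t => ln (yfun c beta rho (xt t) (ut t) i)) 0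
    (- slope i / (yk i + lk i)).
Proof.
have Hln := derivable_pt_lim_ln _ (yk_gt0 i).
rewrite -{1}(line_at0 x dx) -{1}(line_at0 u du) in Hln.
have := derivable_pt_lim_comp _ _ _ _ _ (derivable_yfun_line i) Hln.
congr derivable_pt_lim.
by have := yk_gt0 i; have := yk_add_lk_gt0 i => Hpos Hy; field; lra.
Qed.

Variables (xi : R) (f : ('I_n -> R) -> R) (gf : ('I_n -> R) -> ('I_n -> R)).
Hypothesis f_grad : has_gradient f (gf x) x.

Lemma derivable_merit_barrier_line :
  derivable_pt_lim (fun t => xi * rho * f (xt t)
      - xi * rho * beta * \big[Rplus/R0]_(i < m) ln (yfun c beta rho (xt t) (ut t) i))
    0 (xi * linpart c gf gc beta rho x u dx du).
Proof.
have Hsum := derivable_pt_lim_bigsum (index_enum 'I_m) derivable_ln_yfun_line.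
have := derivable_pt_lim_minus _ _ _ _ _
  (derivable_pt_lim_scal _ (xi * rho) _ _ (derivable_pt_lim_line dx f_grad))
  (derivable_pt_lim_scal _ (xi * rho * beta) _ _ Hsum).
congr derivable_pt_lim; rewrite /linpart Rmult_plus_distr_l !big_distrr /=.
rewrite /Rminus (big_morph Ropp Ropp_plus_distr Ropp_0); congr (_ + _);
  apply: eq_bigr => i _ /=; first ring.
have := yk_add_lk_gt0 i => Hpos; field; lra.
Qed.

End MeritAlongLine.

Lemma RkT0 n m (c : 'I_m -> ('I_n -> R) -> R) gc beta rho x u ex eu i :
  (forall j, ex j = 0) -> (forall i, eu i = 0) ->
  RkT c gc beta rho x u ex eu i = 0.
Proof. by move=> Hex Heu; rewrite /RkT dotv0r // Heu; ring. Qed.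

Lemma qhat0 n m (c : 'I_m -> ('I_n -> R) -> R) gf gc H beta rho x u :
  qhat c gf gc H beta rho x u (fun _ => 0) (fun _ => 0) = 0.
Proof.
have Hdc0 i : dotv (gc i x) (fun _ => 0) = 0 by exact: dotv0r.
rewrite /qhat /linpart /quadQ /quadH dotv0r // !big1 => [|i _|i _|i _];
  rewrite ?Hdc0 ?big1 => *; ring.
Qed.

Theorem lemma3p2 (n m : nat) (beta rho xi : R)
    (f : ('I_n -> R) -> R) (gf : ('I_n -> R) -> ('I_n -> R))
    (c : 'I_m -> ('I_n -> R) -> R) (gc : 'I_m -> ('I_n -> R) -> ('I_n -> R))
    (xk : 'I_n -> R) (uk : 'I_m -> R) (H : 'I_n -> 'I_n -> R)
    (dcx : 'I_n -> R) (dcu : 'I_m -> R) (dx : 'I_n -> R) (du : 'I_m -> R) :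
  0 < beta -> 0 < rho -> 0 < xi ->
  C1_with_grad f gf ->
  (forall i, C1_with_grad (c i) (gc i)) ->
  (forall i j, H i j = H j i) ->
  ((forall i, rvec c beta rho xk uk i = 0) ->
     (forall j, dcx j = 0) /\ (forall i, dcu i = 0)) ->
  (forall i, RkT c gc beta rho xk uk dx du i = RkT c gc beta rho xk uk dcx dcu i) ->
  (forall (ex : 'I_n -> R) (eu : 'I_m -> R),
     (forall i, RkT c gc beta rho xk uk ex eu i = RkT c gc beta rho xk uk dcx dcu i) ->
     qhat c gf gc H beta rho xk uk dx du <= qhat c gf gc H beta rho xk uk ex eu) ->
  exists L : R,
    dir_deriv (Phi f c xi beta rho) xk uk dx du L /\
    L <= xi * linpart c gf gc beta rho xk uk dx du
         + normv (fun i => rvec c beta rho xk uk i + RkT c gc beta rho xk uk dx du i)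
         - normv (rvec c beta rho xk uk) /\
    ((forall i, rvec c beta rho xk uk i = 0) ->
       L <= - (/ 2) * xi * quadQ c gc H beta rho xk uk dx du).
Proof.
move=> Hbeta Hrho Hxi [Hf _] Hc _ Hdc Hfeas Hopt.
have Hcx i : has_gradient (c i) (gc i xk) xk := proj1 (Hc i) xk.
have [Ln [HLn HLn_le]] := right_deriv0_normv
  (derivable_rvec_line dx uk du Hbeta Hrho Hcx).
rewrite /= !line_at0 -/(rvec c beta rho xk uk) in HLn_le.
exists (xi * linpart c gf gc beta rho xk uk dx du + Ln); split; [|split].
- apply: dir_deriv_right_deriv0; apply: right_deriv0_plus HLn.
  exact/right_deriv0_derivable/derivable_merit_barrier_line.
- lra.
- move=> Hr0; have [Hdcx Hdcu] := Hdc Hr0.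
  have Hd0 i : RkT c gc beta rho xk uk dx du i = 0 by rewrite Hfeas RkT0.
  (* d = 0 is feasible, hence qhat d_k <= qhat 0 = 0. *)
  have Hfeas0 i : RkT c gc beta rho xk uk (fun _ => 0) (fun _ => 0) i
      = RkT c gc beta rho xk uk dcx dcu i by rewrite !RkT0.
  have := Hopt _ _ Hfeas0; rewrite qhat0 /qhat.
  have Hnorm0 : normv (fun i => rvec c beta rho xk uk i + RkT c gc beta rho xk uk dx du i) = 0.
    by apply: normv0 => i; rewrite Hr0 Hd0 Rplus_0_r.
  rewrite Hnorm0 (normv0 Hr0) in HLn_le.
  move=> Hq; nra.
Qed.
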